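(* Let $G=(V,E)$ be an undirected graph, $a,b\in[0,1]$, $(w_i)_{i\ge 0}$ a non-negative weight sequence with $\sum_{i\ge0}w_i=1$ and partial sums $Y_i=\sum_{k\ge i}w_k$, let $\vec{x}\in\mathbb{R}^n$ be non-negative with $\|\vec{x}\|_1\le 1$, and let $\varepsilon>0$ and $L\ge 1$ be such that $Y_i>0$ for $0\le i\le L$. Run the Randomized Propagation Algorithm (described in the context) with these inputs. Then for every node $v\in V$ and every $\ell\in\{0,1,\dots,L\}$ the computed estimators satisfy $\mathrm{E}[\hat{\vec{r}}^{(\ell)}(v)]=\vec{r}^{(\ell)}(v)$ and $\mathrm{E}[\hat{\vec{q}}^{(\ell)}(v)]=\vec{q}^{(\ell)}(v)$, where $\vec{r}^{(\ell)}=Y_\ell\,(\mathbf{D}^{-a}\mathbf{A}\mathbf{D}^{-b})^\ell\vec{x}$ and $\vec{q}^{(\ell)}=w_\ell\,(\mathbf{D}^{-a}\mathbf{A}\mathbf{D}^{-b})^\ell\vec{x}$.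
   Context: $G=(V,E)$ has $n$ nodes; $\mathbf{A}$ is its adjacency matrix, $N_u$ the neighbor set and $d_u$ the degree of node $u$, and $\mathbf{D}$ the diagonal degree matrix. Randomized Propagation Algorithm (inputs $G,\vec{x},(w_i),\varepsilon,L$): set $\hat{\vec{r}}^{(0)}=\vec{x}$ and all other vectors to $0$. For $i=0,\dots,L-1$: for each $u\in V$ with $\hat{\vec{r}}^{(i)}(u)\neq 0$ and each neighbor $v\in N_u$, let $c=\frac{Y_{i+1}}{Y_i}\cdot\frac{\hat{\vec{r}}^{(i)}(u)}{d_v^a d_u^b}$; if $c\ge\varepsilon$, add $c$ to $\hat{\vec{r}}^{(i+1)}(v)$; otherwise, with probability $c/\varepsilon$ (independently of all other random choices) add $\varepsilon$ to $\hat{\vec{r}}^{(i+1)}(v)$; then set $\hat{\vec{q}}^{(i)}(u)=\frac{w_i}{Y_i}\hat{\vec{r}}^{(i)}(u)$. Finally set $\hat{\vec{q}}^{(L)}=\frac{w_L}{Y_L}\hat{\vec{r}}^{(L)}$ and output $\hat{\vec{\pi}}=\sum_{i=0}^{L}\hat{\vec{q}}^{(i)}$. *)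

From HB Require Import structures.
From mathcomp Require Import all_boot all_order all_algebra.
From mathcomp Require Import all_classical all_reals all_analysis.
Set Implicit Arguments. Unset Strict Implicit. Unset Printing Implicit Defensive.
Import Order.TTheory GRing.Theory Num.Theory.
Import numFieldNormedType.Exports.
Local Open Scope ring_scope.

(** Every distribution built below has non-negative weights summing to 1. *)
Definition dist (R : realType) (T : Type) := seq (R * T).

Definition dret (R : realType) (T : Type) (x : T) : dist R T := [:: (1, x)].

Definition dbind (R : realType) (A B : Type) (p : dist R A) (f : A -> dist R B)
  : dist R B :=
  flatten [seq [seq (pr.1 * q.1, q.2) | q <- f pr.2] | pr <- p].

Definition expect (R : realType) (T : Type) (p : dist R T) (f : T -> R) : R :=
  \sum_(pr <- p) pr.1 * f pr.2.

(** * Graph data.  The graph is on the node set 'I_n, given by a symmetric,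
    irreflexive adjacency relation e. *)
Definition nbrs (n : nat) (e : rel 'I_n) (u : 'I_n) : {set 'I_n} :=
  [set v | e u v].

Definition deg (R : realType) (n : nat) (e : rel 'I_n) (u : 'I_n) : R :=
  (#|nbrs e u|)%:R.

Definition adjmx (R : realType) (n : nat) (e : rel 'I_n) : 'M[R]_n :=
  \matrix_(i, j) (e i j)%:R.

Definition Dpow (R : realType) (n : nat) (e : rel 'I_n) (s : R) : 'M[R]_n :=
  \matrix_(i, j) ((i == j)%:R * powR (deg R e i) (- s)).

Definition propmx (R : realType) (n : nat) (e : rel 'I_n) (a b : R) : 'M[R]_n :=
  Dpow e a *m adjmx R e *m Dpow e b.

Definition Ytail (R : realType) (w : nat -> R) (i : nat) : R :=
  limn (fun N => \sum_(i <= k < N) w k).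

Definition rvec (R : realType) (n : nat) (e : rel 'I_n) (a b : R)
  (w : nat -> R) (x : 'cV[R]_n) (l : nat) : 'cV[R]_n :=
  Ytail w l *: (propmx e a b ^+ l *m x).

Definition qvec (R : realType) (n : nat) (e : rel 'I_n) (a b : R)
  (w : nat -> R) (x : 'cV[R]_n) (l : nat) : 'cV[R]_n :=
  w l *: (propmx e a b ^+ l *m x).

Definition addat (R : realType) (n : nat) (r : 'I_n -> R) (v : 'I_n) (c : R)
  : 'I_n -> R :=
  fun t => if t == v then r t + c else r t.

Definition cval (R : realType) (n : nat) (e : rel 'I_n) (a b : R)
  (w : nat -> R) (i : nat) (r : 'I_n -> R) (u v : 'I_n) : R :=
  Ytail w i.+1 / Ytail w i * (r u / (powR (deg R e v) a * powR (deg R e u) b)).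

Definition push (R : realType) (n : nat) (eps c : R) (v : 'I_n)
  (acc : 'I_n -> R) : dist R ('I_n -> R) :=
  if eps <= c then dret R (addat acc v c)
  else [:: (c / eps, addat acc v eps); (1 - c / eps, acc)].

Definition pairs (R : realType) (n : nat) (e : rel 'I_n) (r : 'I_n -> R)
  : seq ('I_n * 'I_n) :=
  [seq (u, v) | u <- enum 'I_n, v <- [seq t <- enum 'I_n | (r u != 0) && e u t]].

(** One iteration i: distribution of r^(i+1) given r^(i) = r; all coin
    flips are independent (sequential product of independent choices). *)
Definition prop_step (R : realType) (n : nat) (e : rel 'I_n) (a b : R)
  (w : nat -> R) (eps : R) (i : nat) (r : 'I_n -> R) : dist R ('I_n -> R) :=
  foldl (fun D p => dbind D (push eps (cval e a b w i r p.1 p.2) p.2))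
    (dret R (fun _ => 0)) (pairs e r).

(** Distribution of the trajectory (r^(0), ..., r^(k)) after k iterations,
    encoded as a function j |-> r^(j) (zero for j > k). *)
Fixpoint prop_traj (R : realType) (n : nat) (e : rel 'I_n) (a b : R)
  (w : nat -> R) (eps : R) (x : 'I_n -> R) (k : nat)
  : dist R (nat -> 'I_n -> R) :=
  match k with
  | 0 => dret R (fun j => if j == 0%N then x else (fun _ => 0))
  | k'.+1 =>
      dbind (prop_traj e a b w eps x k')
        (fun h => dbind (prop_step e a b w eps k' (h k'))
                    (fun r' => dret R (fun j => if j == k'.+1 then r' else h j)))
  end.

Definition qhat (R : realType) (n : nat) (w : nat -> R)
  (h : nat -> 'I_n -> R) (l : nat) (v : 'I_n) : R :=
  w l / Ytail w l * h l v.

From HB Require Import structures.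
From mathcomp Require Import all_boot all_order all_algebra.
From mathcomp Require Import all_classical all_reals all_analysis.
From mathcomp Require Import ring.
Set Implicit Arguments. Unset Strict Implicit. Unset Printing Implicit Defensive.
Import Order.TTheory GRing.Theory Num.Theory.
Import numFieldNormedType.Exports.
Local Open Scope classical_set_scope.
Local Open Scope ring_scope.

(* A coin that adds [eps] with probability [c / eps] adds [c] in expectation,
   so conditionally on level [i] the expected level [i+1] is the exact
   propagation of level [i]:
     E[r^(i+1)(v) | r^(i)] = sum_(u ~ v) Y_(i+1)/Y_i * r^(i)(u) / (d_v^a d_u^b).
   By symmetry of the graph this is (Y_(i+1)/Y_i) (D^-a A D^-b r^(i))(v), so
   linearity of expectation and induction on [i], starting from Y_0 = 1, give
   E[r^(i)] = Y_i (D^-a A D^-b)^i x. *)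

Section Expectation.
Variable R : realType.

Definition mass1 (T : Type) (p : dist R T) := expect p (fun=> 1) = 1.

Lemma eq_expect (T : Type) (p : dist R T) f g :
  f =1 g -> expect p f = expect p g.
Proof. by move=> fg; apply: eq_bigr => pr _; rewrite fg. Qed.

Lemma expect_cat (T : Type) (p q : dist R T) f :
  expect (p ++ q) f = expect p f + expect q f.
Proof. exact: big_cat. Qed.

Lemma expect_dret (T : Type) (t : T) f : expect (dret R t) f = f t.
Proof. by rewrite /expect big_seq1 mul1r. Qed.

Lemma expect_dbind (A B : Type) (p : dist R A) (g : A -> dist R B) f :
  expect (dbind p g) f = expect p (fun a => expect (g a) f).
Proof.
elim: p => [|pr p IH]; first by rewrite /expect !big_nil.
rewrite /dbind /= expect_cat -/(dbind p g) IH /expect big_cons big_map.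
by rewrite mulr_sumr; congr (_ + _); apply: eq_bigr => q _; rewrite mulrA.
Qed.

Lemma expectZ (T : Type) (p : dist R T) c f :
  expect p (fun t => c * f t) = c * expect p f.
Proof. by rewrite /expect mulr_sumr; apply: eq_bigr => pr _; rewrite mulrCA. Qed.

Lemma expectD (T : Type) (p : dist R T) f g :
  expect p (fun t => f t + g t) = expect p f + expect p g.
Proof. by rewrite /expect -big_split; apply: eq_bigr => pr _; rewrite mulrDr. Qed.

Lemma expect_sum (T I : Type) (p : dist R T) (s : seq I) (F : I -> T -> R) :
  expect p (fun t => \sum_(j <- s) F j t) = \sum_(j <- s) expect p (F j).
Proof. by rewrite /expect; under eq_bigr do rewrite mulr_sumr; rewrite exchange_big. Qed.

Lemma expect_cst (T : Type) (p : dist R T) c : mass1 p -> expect p (fun=> c) = c.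
Proof.
move=> p1; rewrite (@eq_expect _ p _ (fun=> c * 1)) => [|t]; last by rewrite mulr1.
by rewrite expectZ p1 mulr1.
Qed.

Lemma mass1_dret (T : Type) (t : T) : mass1 (dret R t).
Proof. exact: expect_dret. Qed.

Lemma mass1_dbind (A B : Type) (p : dist R A) (g : A -> dist R B) :
  mass1 p -> (forall a, mass1 (g a)) -> mass1 (dbind p g).
Proof. by move=> p1 g1; rewrite /mass1 expect_dbind (eq_expect p g1). Qed.

End Expectation.

Section Push.
Variables (R : realType) (n : nat) (eps : R).
Hypothesis eps_neq0 : eps != 0.

Lemma mass1_push (c : R) (v : 'I_n) acc : mass1 (push eps c v acc).
Proof.
rewrite /push; case: ifP => _; first exact: mass1_dret.
by rewrite /mass1 /expect big_cons big_seq1 !mulr1 addrC subrK.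
Qed.

Lemma expect_push (c : R) (v t : 'I_n) acc :
  expect (push eps c v acc) (fun r => r t) = acc t + (t == v)%:R * c.
Proof.
rewrite /push /addat; case: ifP => _.
  by rewrite expect_dret; case: eqP; rewrite ?mul1r ?mul0r ?addr0.
rewrite /expect big_cons big_seq1 /=; case: eqP => _; first by rewrite mul1r; field.
by rewrite mul0r addr0 -mulrDl addrC subrK mul1r.
Qed.

Variable C : 'I_n -> 'I_n -> R.

Local Notation push_all :=
  (foldl (fun D p => dbind D (push eps (C p.1 p.2) p.2))).

Lemma mass1_push_all (ps : seq ('I_n * 'I_n)) D : mass1 D -> mass1 (push_all D ps).
Proof.
elim: ps D => [|p ps IH] D D1 //=; apply/IH/mass1_dbind => // acc.
exact: mass1_push.
Qed.

Lemma expect_push_all (ps : seq ('I_n * 'I_n)) D t : mass1 D ->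
  expect (push_all D ps) (fun r => r t) =
  expect D (fun r => r t) + \sum_(p <- ps) (t == p.2)%:R * C p.1 p.2.
Proof.
elim: ps D => [|p ps IH] D D1 /=; first by rewrite big_nil addr0.
rewrite IH; last by apply: mass1_dbind => // acc; exact: mass1_push.
rewrite expect_dbind (eq_expect D (fun acc => expect_push _ _ _ acc)).
by rewrite expectD expect_cst // big_cons addrA.
Qed.

End Push.

Section Propagation.
Variables (R : realType) (n : nat) (e : rel 'I_n) (a b : R) (w : nat -> R).

Lemma sum_pairs_at (r : 'I_n -> R) (F : 'I_n -> 'I_n -> R) t :
  (forall u, r u = 0 -> F u t = 0) ->
  \sum_(p <- pairs e r) (t == p.2)%:R * F p.1 p.2 = \sum_u (e u t)%:R * F u t.
Proof.
move=> F0; rewrite big_allpairs_dep big_enum; apply: eq_bigr => u _ /=.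
rewrite big_filter big_mkcond (bigD1_seq t) ?mem_enum ?enum_uniq //= eqxx mul1r.
rewrite big1 ?addr0 => [|v vt]; last first.
  by case: ifP => // _; rewrite eq_sym (negbTE vt) mul0r.
by case: (eqVneq (r u) 0) => [/F0 ->|_]; case: (e u t); rewrite ?mulr0 ?mul0r ?mul1r.
Qed.

Lemma cvalE i (r : 'I_n -> R) u v :
  cval e a b w i r u v = cval e a b w i (fun=> 1) u v * r u.
Proof. by rewrite /cval; ring. Qed.

Variable eps : R.
Hypothesis eps_neq0 : eps != 0.

Lemma mass1_prop_step i r : mass1 (prop_step e a b w eps i r).
Proof. exact/mass1_push_all/mass1_dret. Qed.

Lemma expect_prop_step i r t :
  expect (prop_step e a b w eps i r) (fun r' => r' t) =
  \sum_u (e u t)%:R * cval e a b w i r u t.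
Proof.
rewrite /prop_step (expect_push_all eps_neq0) ?expect_dret ?add0r; last exact: mass1_dret.
by apply: sum_pairs_at => u ru0; rewrite cvalE ru0 mulr0.
Qed.

Variable x : 'I_n -> R.
Local Notation traj := (prop_traj e a b w eps x).

Lemma expect_traj_stable k j v : (j <= k)%N ->
  expect (traj k) (fun h => h j v) = expect (traj j) (fun h => h j v).
Proof.
elim: k => [|k IH]; first by rewrite leqn0 => /eqP ->.
rewrite leq_eqVlt => /orP [/eqP -> //|jk]; rewrite -IH // /= expect_dbind.
apply: eq_expect => h.
rewrite expect_dbind -[RHS](expect_cst (h j v) (mass1_prop_step k (h k))).
by apply: eq_expect => r'; rewrite expect_dret /= (ltn_eqF jk).
Qed.

Lemma expect_traj_succ k t :
  expect (traj k.+1) (fun h => h k.+1 t) =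
  \sum_u (e u t)%:R * cval e a b w k (fun=> 1) u t * expect (traj k) (fun h => h k u).
Proof.
under [RHS]eq_bigr do rewrite -expectZ.
rewrite /= expect_dbind -expect_sum; apply: eq_expect => h.
rewrite expect_dbind (@eq_expect _ _ _ _ (fun r' => r' t)) => [|r']; last first.
  by rewrite expect_dret /= eqxx.
by rewrite expect_prop_step; apply: eq_bigr => u _; rewrite cvalE mulrA.
Qed.

End Propagation.

Section Graph.
Variables (R : realType) (n : nat) (e : rel 'I_n) (a b : R).

Lemma propmxE t u :
  propmx e a b t u = powR (deg R e t) (- a) * (e t u)%:R * powR (deg R e u) (- b).
Proof.
rewrite /propmx !mxE (bigD1 u) //= big1 ?addr0 => [|j ju]; last first.
  by rewrite !mxE (negbTE ju) mul0r mulr0.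
rewrite !mxE eqxx mul1r (bigD1 t) //= big1 ?addr0 => [|j jt]; last first.
  by rewrite !mxE eq_sym (negbTE jt) !mul0r.
by rewrite !mxE eqxx mul1r.
Qed.

Lemma deg_gt0 t u : e t u -> 0 < deg R e t.
Proof. by move=> etu; rewrite ltr0n; apply/card_gt0P; exists u; rewrite inE. Qed.

Hypothesis e_sym : symmetric e.

Lemma cval_propmx (w : nat -> R) k t u : Ytail w k != 0 ->
  (e u t)%:R * cval e a b w k (fun=> 1) u t * Ytail w k =
  Ytail w k.+1 * propmx e a b t u.
Proof.
move=> Yk0; rewrite propmxE e_sym /cval.
case etu: (e t u); last by rewrite !(mul0r, mulr0).
have pa : powR (deg R e t) a != 0 by rewrite gt_eqF // powR_gt0 // (deg_gt0 etu).
have pb : powR (deg R e u) b != 0.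
  by rewrite gt_eqF // powR_gt0 // (@deg_gt0 u t) // e_sym.
by rewrite !powRN; field; rewrite Yk0 pa pb.
Qed.

End Graph.

Lemma Ytail0 (R : realType) (w : nat -> R) :
  (fun N : nat => \sum_(k < N) w k) @ \oo --> (1 : R) -> Ytail w 0 = 1.
Proof.
move=> w1; rewrite /Ytail (_ : (fun N => _) = fun N : nat => \sum_(k < N) w k).
  exact: cvg_lim.
by apply: funext => N; rewrite big_mkord.
Qed.

Lemma expect_traj (R : realType) (n : nat) (e : rel 'I_n) (e_sym : symmetric e)
    (a b : R) (w : nat -> R) (eps : R) (eps_neq0 : eps != 0) (x : 'cV[R]_n) k t :
    Ytail w 0 = 1 -> (forall i, (i < k)%N -> Ytail w i != 0) ->
  expect (prop_traj e a b w eps (fun u => x u ord0) k) (fun h => h k t) =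
  Ytail w k * (propmx e a b ^+ k *m x) t ord0.
Proof.
move=> Y0; elim: k t => [|k IH] t Yk0.
  by rewrite expect_dret /= Y0 mul1r expr0 mul1mx.
rewrite (expect_traj_succ _ _ _ _ eps_neq0) exprS -mulmxA mxE mulr_sumr.
apply: eq_bigr => u _; rewrite IH => [|i ik]; last by rewrite Yk0 // ltnW.
by rewrite mulrA cval_propmx ?Yk0 // mulrA.
Qed.

Theorem lemma4p1 (R : realType) (n : nat) (e : rel 'I_n)
  (e_sym : symmetric e) (e_irr : irreflexive e)
  (a b : R) (ha : 0 <= a <= 1) (hb : 0 <= b <= 1)
  (w : nat -> R) (w_ge0 : forall i, 0 <= w i)
  (w_sum : (fun N : nat => \sum_(k < N) w k) @ \oo --> (1 : R))
  (x : 'cV[R]_n) (x_ge0 : forall u, 0 <= x u ord0)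
  (x_l1 : \sum_u `|x u ord0| <= 1)
  (eps : R) (eps_gt0 : 0 < eps) (L : nat) (L_ge1 : (1 <= L)%N)
  (Y_gt0 : forall i, (i <= L)%N -> 0 < Ytail w i) :
  forall (v : 'I_n) (l : nat), (l <= L)%N ->
    expect (prop_traj e a b w eps (fun u => x u ord0) L) (fun h => h l v)
      = rvec e a b w x l v ord0 /\
    expect (prop_traj e a b w eps (fun u => x u ord0) L) (fun h => qhat w h l v)
      = qvec e a b w x l v ord0.
Proof.
move=> v l lL.
have eps_neq0 : eps != 0 by rewrite gt_eqF.
have Yl0 : Ytail w l != 0 by rewrite gt_eqF // Y_gt0.
have r_unbiased : expect (prop_traj e a b w eps (fun u => x u ord0) L) (fun h => h l v)
    = rvec e a b w x l v ord0.
  rewrite expect_traj_stable // (expect_traj _ _ _ eps_neq0) ?Ytail0 // => [|i il].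
    by rewrite !mxE.
  by rewrite gt_eqF // Y_gt0 // (leq_trans (ltnW il)).
split=> //; rewrite /qhat expectZ r_unbiased /rvec /qvec !mxE.
by field.
Qed.
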